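(* The geometric standard strongly integral super-packing is invariant under the translations $(x,y)\mapsto(x+2,y)$ and $(x,y)\mapsto(x,y+2)$ and under the reflections $(x,y)\mapsto(-x,y)$ and $(x,y)\mapsto(x,-y)$. The crystallographic group generated by these four motions is the complete group of Euclidean motions of the plane leaving the geometric standard strongly integral super-packing invariant.
   Context: Circles are taken in $\hat{\mathbb C}=\mathbb R^2\cup\{\infty\}$; lines count as circles. A Descartes configuration is a set of four mutually tangent circles with disjoint interiors; an ordered, oriented one carries an ordering and total orientation, with signed curvatures (reciprocal radius, negative if the interior is unbounded, $0$ for lines). Its augmented curvature-center coordinate matrix $W_{\mathcal D}$ has $i$-th row $(\bar b_i,b_i,b_ix_i,b_iy_i)$ with $(x_i,y_i)$ the center and $\bar b_i=b_i(x_i^2+y_i^2)-1/b_i$ (for a line: $(2p\cdot n,0,n_x,n_y)$, $n$ the unit normal pointing into the interior half-plane, $p$ a point of the line); it determines $\mathcal D$. Let $S_i$ be the $4\times4$ integer matrix equal to the identity except that row $i$ has $-1$ in position $i$ and $2$ elsewhere, $S_i^\perp=S_i^T$, and $\mathcal A^S=\langle S_i,S_i^\perp\rangle$ the super-Apollonian group, acting by $W_{U[\mathcal D]}=UW_{\mathcal D}$. The geometric super-packing generated by $\mathcal D$ is the set of all circles of configurations in $\mathcal A^S[\mathcal D]$. The standard strongly integral super-packing is the one generated by the configuration $\mathcal D_1$ with $W_{\mathcal D_1}=\begin{pmatrix}2&0&0&1\\2&0&0&-1\\0&1&1&0\\0&1&-1&0\end{pmatrix}$, i.e. the lines $y=1$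 and $y=-1$ and the circles of radius $1$ centered at $(1,0)$ and $(-1,0)$. *)

From HB Require Import structures.
From mathcomp Require Import all_boot all_order all_algebra.
From mathcomp Require Import boolp classical_sets reals.
Set Implicit Arguments. Unset Strict Implicit. Unset Printing Implicit Defensive.
Import Order.TTheory GRing.Theory Num.Theory.
Local Open Scope ring_scope.
Local Open Scope classical_set_scope.

Definition sqdist {R : realType} (p q : R * R) : R :=
  (p.1 - q.1) ^+ 2 + (p.2 - q.2) ^+ 2.

Definition euclidean_motion {R : realType} (f : R * R -> R * R) : Prop :=
  forall p q, sqdist (f p) (f q) = sqdist p q.

(* Row (bbar, b, b x, b y) of an augmented curvature-center coordinate matrix
   and the geometric circle (point set in R^2) it describes:
   b <> 0 : circle with center (bx/b, by/b), radius 1/|b|;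
   b = 0  : line {q | n . q = p . n} where n = (bx,by), bbar = 2 p . n. *)
Definition circle_of_row {R : realType} (w : 'rV[R]_4) : set (R * R) :=
  let bbar := w ord0 (inord 0) in
  let b := w ord0 (inord 1) in
  let bx := w ord0 (inord 2) in
  let by_ := w ord0 (inord 3) in
  if b != 0 then
    [set q | (q.1 - bx / b) ^+ 2 + (q.2 - by_ / b) ^+ 2 = (b^-1) ^+ 2]
  else [set q | bx * q.1 + by_ * q.2 = bbar / 2].

Definition Smx {R : realType} (i : 'I_4) : 'M[R]_4 :=
  \matrix_(r, c) (if r == i then (if c == i then -1 else 2) else (r == c)%:R).

Inductive superApollonian {R : realType} : 'M[R]_4 -> Prop :=
| sA_one : superApollonian 1%:M
| sA_S i U : superApollonian U -> superApollonian (Smx i *m U)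
| sA_Sinv i U : superApollonian U -> superApollonian (invmx (Smx i) *m U)
| sA_ST i U : superApollonian U -> superApollonian ((Smx i)^T *m U)
| sA_STinv i U : superApollonian U -> superApollonian (invmx ((Smx i)^T) *m U).

Definition W1_entries : seq (seq int) :=
  [:: [:: 2%:Z; 0; 0; 1];
      [:: 2%:Z; 0; 0; -1];
      [:: 0%:Z; 1; 1; 0];
      [:: 0%:Z; 1; -1; 0]].

(* W_{D_1}: the lines y = 1, y = -1 and unit circles centered at (1,0), (-1,0). *)
Definition W1 {R : realType} : 'M[R]_4 :=
  \matrix_(i, j) ((nth [::] W1_entries i)`_j)%:~R.

(* The geometric standard strongly integral super-packing: all circles of
   all configurations U[D_1], U in A^S  (W_{U[D_1]} = U W_{D_1}). *)
Definition std_superpacking {R : realType} : set (set (R * R)) :=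
  [set C | exists (U : 'M[R]_4) (i : 'I_4),
      superApollonian U /\ C = circle_of_row (row i (U *m W1))].

Definition leaves_invariant {R : realType} (f : R * R -> R * R) : Prop :=
  [set f @` C | C in (@std_superpacking R)] = std_superpacking.

Definition trans_x {R : realType} (p : R * R) : R * R := (p.1 + 2, p.2).
Definition trans_y {R : realType} (p : R * R) : R * R := (p.1, p.2 + 2).
Definition refl_x {R : realType} (p : R * R) : R * R := (- p.1, p.2).
Definition refl_y {R : realType} (p : R * R) : R * R := (p.1, - p.2).
Definition trans_x_inv {R : realType} (p : R * R) : R * R := (p.1 - 2, p.2).
Definition trans_y_inv {R : realType} (p : R * R) : R * R := (p.1, p.2 - 2).

(* Generators and their inverses (reflections are involutions). *)
Definition motion_gen {R : realType} (g : R * R -> R * R) : Prop :=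
  g = trans_x \/ g = trans_y \/ g = refl_x \/ g = refl_y \/
  g = trans_x_inv \/ g = trans_y_inv.

Inductive motion_group {R : realType} : (R * R -> R * R) -> Prop :=
| mg_id : motion_group id
| mg_gen g h : motion_gen g -> motion_group h -> motion_group (g \o h).

From HB Require Import structures.
From mathcomp Require Import all_boot all_order all_algebra all_fingroup.
From mathcomp Require Import boolp classical_sets reals ring lra zify.
Set Implicit Arguments. Unset Strict Implicit. Unset Printing Implicit Defensive.
Import Order.TTheory GRing.Theory Num.Theory.
Local Open Scope ring_scope.
Local Open Scope classical_set_scope.

(* Every matrix of the super-Apollonian group is congruent to the identity
   modulo 2, so every row (bbar, b, b x, b y) of a configuration of the packing
   has (b, b x, b y) congruent to (0, 0, 1) or (1, 1, 0) modulo 2, like the rows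
   of W_{D_1}.  Hence every unit circle of the packing is centred at a point of
   (2Z+1) x 2Z, and no circle of the packing is a vertical line.

   Each of the four motions acts on curvature-centre coordinates by right
   multiplication by a matrix M with W_{D_1} M = P X W_{D_1}, where P permutes
   rows and X lies in A^S; since A^S is normalised by permutation matrices, the
   motion maps the packing into itself, and so does its inverse.

   Conversely, an invariant motion f sends the unit circles centred at (1,0),
   (3,0) and (1,2) to unit circles of the packing, hence these centres into
   (2Z+1) x 2Z.  This forces f x = f (1,0) + Q (x - (1,0)) for a signed
   permutation matrix Q.  If Q swapped the axes, f would map the line y = 1
   onto a vertical line; so Q is diagonal and f is a product of generators. *)

Local Notation o0 := (@Ordinal 4 0 isT).
Local Notation o1 := (@Ordinal 4 1 isT).
Local Notation o2 := (@Ordinal 4 2 isT).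
Local Notation o3 := (@Ordinal 4 3 isT).

Lemma invmx_involutive (F : comUnitRingType) n (A : 'M[F]_n) :
  A *m A = 1%:M -> invmx A = A.
Proof.
move=> AA; have [Au _] := mulmx1_unit AA.
by rewrite -[LHS]mulmx1 -AA mulmxA mulVmx // mul1mx.
Qed.

Section PermConj.
Variables (F : pzRingType) (n : nat).
Implicit Types (s : 'S_n) (U V : 'M[F]_n).

Definition perm_conj s U := perm_mx s *m U *m perm_mx s^-1.

Lemma perm_conjE s U i j : perm_conj s U i j = U (s i) (s j).
Proof. by rewrite /perm_conj -row_permE -col_permE !mxE. Qed.

Lemma perm_conjM s U V : perm_conj s (U *m V) = perm_conj s U *m perm_conj s V.
Proof.
rewrite /perm_conj !mulmxA -[_ *m perm_mx s^-1 *m perm_mx s]mulmxA.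
by rewrite -perm_mxM mulVg perm_mx1 mulmx1.
Qed.

Lemma perm_conj1 s : perm_conj s 1%:M = 1%:M.
Proof. by rewrite /perm_conj mulmx1 -perm_mxM mulgV perm_mx1. Qed.

Lemma perm_conjKV s U : perm_mx s *m perm_conj s^-1 U = U *m perm_mx s.
Proof. by rewrite /perm_conj invgK !mulmxA -perm_mxM mulgV perm_mx1 mul1mx. Qed.

End PermConj.

Section SuperApollonian.
Variable R : realType.
Implicit Types U V : 'M[R]_4.

Lemma Smx_involutive i : Smx i *m Smx i = 1%:M :> 'M[R]_4.
Proof.
apply/matrixP => r c; rewrite !mxE !big_ord_recr big_ord0 /= !mxE.
by case: i r c => [[|[|[|[|i]]]] ?] [[|[|[|[|r]]]] ?] [[|[|[|[|c]]]] ?] //=; ring.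
Qed.

Lemma invmx_Smx i : invmx (Smx i) = Smx i :> 'M[R]_4.
Proof. exact/invmx_involutive/Smx_involutive. Qed.

Lemma invmx_trSmx i : invmx (Smx i)^T = (Smx i)^T :> 'M[R]_4.
Proof. by apply/invmx_involutive; rewrite -trmx_mul Smx_involutive trmx1. Qed.

Lemma superApollonian_mul U V :
  superApollonian U -> superApollonian V -> superApollonian (U *m V).
Proof.
elim=> [|i W _ IH|i W _ IH|i W _ IH|i W _ IH] sV; rewrite ?mul1mx // -mulmxA.
- exact/sA_S/IH.
- exact/sA_Sinv/IH.
- exact/sA_ST/IH.
- exact/sA_STinv/IH.
Qed.

Lemma superApollonian_Smx i : superApollonian (Smx i : 'M[R]_4).
Proof. by rewrite -[Smx _]mulmx1; do 2!constructor. Qed.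

Lemma superApollonian_trSmx i : superApollonian ((Smx i)^T : 'M[R]_4).
Proof. by rewrite -[_^T]mulmx1; do 2!constructor. Qed.

Lemma perm_conj_Smx s i : perm_conj s (Smx i) = Smx ((s^-1)%g i) :> 'M[R]_4.
Proof.
apply/matrixP => r c; rewrite perm_conjE !mxE.
have si x : (s x == i) = (x == (s^-1)%g i) by rewrite -{1}(permKV s i) (inj_eq perm_inj).
by rewrite !si (inj_eq perm_inj).
Qed.

Lemma perm_conj_trSmx s i : perm_conj s (Smx i)^T = (Smx ((s^-1)%g i))^T :> 'M[R]_4.
Proof. by rewrite -perm_conj_Smx; apply/matrixP => r c; rewrite !(perm_conjE, mxE). Qed.

Lemma superApollonian_perm_conj s U :
  superApollonian U -> superApollonian (perm_conj s U).
Proof.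
elim=> [|i W _ IH|i W _ IH|i W _ IH|i W _ IH]; first by rewrite perm_conj1; constructor.
all: rewrite ?invmx_Smx ?invmx_trSmx perm_conjM ?perm_conj_Smx ?perm_conj_trSmx.
all: by constructor.
Qed.

End SuperApollonian.

Section Parity.
Variable R : realType.
Implicit Types U V : 'M[R]_4.

Definition eq1_mod2 U :=
  exists2 V : 'M[R]_4, forall i j, V i j \is a Num.int & U = 1%:M + 2%:R *: V.

Lemma eq1_mod2_1 : eq1_mod2 1%:M.
Proof. by exists 0 => [i j|]; rewrite ?mxE ?scaler0 ?addr0. Qed.

Lemma eq1_mod2_mul U V : eq1_mod2 U -> eq1_mod2 V -> eq1_mod2 (U *m V).
Proof.
move=> [A Aint ->] [B Bint ->]; exists (A + B + 2%:R *: (A *m B)).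
  move=> i j; rewrite !mxE !rpredD ?rpredM ?rpred_nat //.
  by apply: rpred_sum => k _; apply: rpredM.
rewrite !(mulmxDl, mulmxDr, mul1mx, mulmx1) -!scalemxAl -!scalemxAr.
by apply/matrixP => i j; rewrite !mxE; ring.
Qed.

Lemma eq1_mod2_tr U : eq1_mod2 U -> eq1_mod2 U^T.
Proof.
move=> [A Aint ->]; exists A^T => [i j|]; first by rewrite mxE.
by rewrite linearD /= trmx1 linearZ.
Qed.

Lemma eq1_mod2_Smx i : eq1_mod2 (Smx i).
Proof.
exists (\matrix_(r, c) (if r == i then (if c == i then -1 else 1) else 0)).
  by move=> r c; rewrite mxE; do 2?case: ifP => _; rewrite ?rpredN ?rpred1 ?rpred0.
apply/matrixP => r c; rewrite !mxE.
by case: (eqVneq r i) => [->|_]; case: (eqVneq c i) => _ /=; ring.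
Qed.

Lemma superApollonian_eq1_mod2 U : superApollonian U -> eq1_mod2 U.
Proof.
elim=> [|i W _ IH|i W _ IH|i W _ IH|i W _ IH]; first exact: eq1_mod2_1.
all: rewrite ?invmx_Smx ?invmx_trSmx; apply: eq1_mod2_mul => //.
all: by [apply: eq1_mod2_Smx | apply/eq1_mod2_tr/eq1_mod2_Smx].
Qed.

End Parity.

Section RowParity.
Variable R : realType.

Lemma superApollonian_entry_mod2 (U : 'M[R]_4) i j : superApollonian U ->
  exists n : int, (U *m W1) i j = W1 i j + 2 * n%:~R.
Proof.
move/superApollonian_eq1_mod2 => [V Vint ->].
have /intrP [n Vn] : (V *m W1) i j \is a Num.int.
  by rewrite mxE rpred_sum // => k _; rewrite rpredM ?Vint // mxE intr_int.
by exists n; rewrite -Vn mulmxDl mul1mx -scalemxAl !mxE.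
Qed.

Definition row_parity (w : 'rV[R]_4) :=
  (exists z1 z2 z3 : int, [/\ w ord0 o1 = (2 * z1)%:~R, w ord0 o2 = (2 * z2)%:~R
                            & w ord0 o3 = (2 * z3 + 1)%:~R]) \/
  (exists z1 z2 z3 : int, [/\ w ord0 o1 = (2 * z1 + 1)%:~R, w ord0 o2 = (2 * z2 + 1)%:~R
                            & w ord0 o3 = (2 * z3)%:~R]).

Lemma superApollonian_row_parity (U : 'M[R]_4) i :
  superApollonian U -> row_parity (row i (U *m W1)).
Proof.
move=> sAU; have rowE k : row i (U *m W1) ord0 k = (U *m W1) i k by rewrite mxE.
rewrite /row_parity !rowE {rowE}.
have [n1 ->] := superApollonian_entry_mod2 i o1 sAU.
have [n2 ->] := superApollonian_entry_mod2 i o2 sAU.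
have [n3 ->] := superApollonian_entry_mod2 i o3 sAU.
case: i => [[|[|[|[|i]]]] ?] //; rewrite !mxE /=.
- by left; exists n1, n2, n3; split; rewrite !(intrD, intrM); ring.
- by left; exists n1, n2, (n3 - 1); split; rewrite !(intrD, intrM, intrB); ring.
- by right; exists n1, n2, n3; split; rewrite !(intrD, intrM); ring.
- by right; exists n1, (n2 - 1), n3; split; rewrite !(intrD, intrM, intrB); ring.
Qed.

Lemma row_parity_line w : row_parity w -> w ord0 o1 = 0 -> w ord0 o3 != 0.
Proof.
by case=> [] [z1 [z2 [z3 [-> _ ->]]]] /eqP; rewrite !intr_eq0 => /eqP ?; lia.
Qed.
End RowParity.

Lemma image_can {T U : Type} (f : T -> U) (g : U -> T) (A : set T) :
  cancel f g -> cancel g f -> f @` A = g @^-1` A.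
Proof.
move=> fK gK; apply/seteqP; split => [_ [p Ap <-]|q Agq] /=; first by rewrite fK.
by exists (g q); rewrite ?gK.
Qed.

Section Circles.
Variable R : realType.
Implicit Types (w : 'rV[R]_4).

Definition circle_of (bb b0 bx by_ : R) : set (R * R) :=
  if b0 != 0 then
    [set q | (q.1 - bx / b0) ^+ 2 + (q.2 - by_ / b0) ^+ 2 = b0^-1 ^+ 2]
  else [set q | bx * q.1 + by_ * q.2 = bb / 2].

Lemma circle_of_rowE w :
  circle_of_row w = circle_of (w ord0 o0) (w ord0 o1) (w ord0 o2) (w ord0 o3).
Proof.
have io k (lt_k4 : (k < 4)%N) : inord k = Ordinal lt_k4 by apply: val_inj; rewrite /= inordK.
by rewrite /circle_of_row (io 0 isT) (io 1 isT) (io 2 isT) (io 3 isT).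
Qed.

Definition translation (a b : R) (p : R * R) : R * R := (p.1 + a, p.2 + b).
Definition sign_change (s t : R) (p : R * R) : R * R := (s * p.1, t * p.2).

Lemma translation_circle (a b bb b0 bx by_ : R) :
  translation a b @` circle_of bb b0 bx by_ =
  circle_of (bb + 2 * (a * bx + b * by_) + (a ^+ 2 + b ^+ 2) * b0) b0
            (bx + a * b0) (by_ + b * b0).
Proof.
rewrite (@image_can _ _ _ (translation (- a) (- b))); last 2 first.
- by case=> x y; rewrite /translation /=; congr pair; ring.
- by case=> x y; rewrite /translation /=; congr pair; ring.
rewrite /circle_of; have [->|b0n] := eqVneq b0 0; apply: eq_set => q /=.
  by apply: propext; split => ?; lra.
by congr (_ ^+ 2 + _ ^+ 2 = _); field.
Qed.

Lemma sign_change_circle (s t bb b0 bx by_ : R) : s ^+ 2 = 1 -> t ^+ 2 = 1 ->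
  sign_change s t @` circle_of bb b0 bx by_ = circle_of bb b0 (s * bx) (t * by_).
Proof.
move=> s2 t2; have sK : cancel (sign_change s t) (sign_change s t).
  by case=> x y; rewrite /sign_change /= !mulrA -!expr2 s2 t2 !mul1r.
rewrite (image_can _ sK sK) /circle_of; case: ifP => _; apply: eq_set => q /=.
  by congr (_ + _ = _); nra.
by congr (_ = _); ring.
Qed.

Definition mx4 (m : seq (seq R)) : 'M[R]_4 := \matrix_(i, j) (nth [::] m i)`_j.

(* Moving the centre by (a, b) adds 2 (a bx + b by) + (a^2 + b^2) b to
   bbar = b |centre|^2 - 1/b; for lines (b = 0) it adds 2 (a bx + b by). *)
Definition translation_mx (a b : R) := mx4
  [:: [:: 1; 0; 0; 0]; [:: a ^+ 2 + b ^+ 2; 1; a; b];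
      [:: 2 * a; 0; 1; 0]; [:: 2 * b; 0; 0; 1]].

Definition sign_change_mx (s t : R) := mx4
  [:: [:: 1; 0; 0; 0]; [:: 0; 1; 0; 0]; [:: 0; 0; s; 0]; [:: 0; 0; 0; t]].

Lemma rowV_mulmxE w (M : 'M[R]_4) k : (w *m M) ord0 k =
  w ord0 o0 * M o0 k + w ord0 o1 * M o1 k + w ord0 o2 * M o2 k + w ord0 o3 * M o3 k.
Proof.
rewrite mxE !big_ord_recr big_ord0 /= add0r.
by congr (_ * _ + _ * _ + _ * _ + _ * _); congr (_ _ _); apply: val_inj.
Qed.

Lemma translation_circle_of_row (a b : R) w :
  translation a b @` circle_of_row w = circle_of_row (w *m translation_mx a b).
Proof.
rewrite !circle_of_rowE translation_circle !rowV_mulmxE !mxE /=.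
by congr circle_of; ring.
Qed.

Lemma sign_change_circle_of_row (s t : R) w : s ^+ 2 = 1 -> t ^+ 2 = 1 ->
  sign_change s t @` circle_of_row w = circle_of_row (w *m sign_change_mx s t).
Proof.
move=> s2 t2; rewrite !circle_of_rowE sign_change_circle // !rowV_mulmxE !mxE /=.
by congr circle_of; ring.
Qed.

End Circles.

Section PlaneGeometry.
Variable R : realType.

Lemma orthogonal2_eq0 (x1 x2 a1 a2 b1 b2 : R) : a1 * b2 - a2 * b1 != 0 ->
  x1 * a1 + x2 * a2 = 0 -> x1 * b1 + x2 * b2 = 0 -> x1 = 0 /\ x2 = 0.
Proof.
move=> det xa xb.
have : x1 * (a1 * b2 - a2 * b1) = b2 * (x1 * a1 + x2 * a2) - a2 * (x1 * b1 + x2 * b2) by ring.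
have : x2 * (a1 * b2 - a2 * b1) = a1 * (x1 * b1 + x2 * b2) - b1 * (x1 * a1 + x2 * a2) by ring.
rewrite xa xb !mulr0 subr0 => /eqP + /eqP.
by rewrite !mulf_eq0 (negbTE det) !orbF => /eqP -> /eqP ->.
Qed.

Lemma sqdist_midpoint (A A' m : R * R) (r : R) :
  sqdist A m = r -> sqdist A' m = r -> sqdist A A' = 4 * r ->
  A' = (2 * m.1 - A.1, 2 * m.2 - A.2).
Proof.
case: A A' m => [x1 x2] [y1 y2] [m1 m2]; rewrite /sqdist /= => dA dA' dAA'.
have : (x1 + y1 - 2 * m1) ^+ 2 + (x2 + y2 - 2 * m2) ^+ 2 = 0 by lra.
move/eqP; rewrite paddr_eq0 ?sqr_ge0 // !sqrf_eq0 => /andP [/eqP e1 /eqP e2].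
by congr pair; lra.
Qed.

Lemma circle_of_two_diameters (bb b0 bx by_ m1 m2 a1 a2 c1 c2 : R) :
  a1 * c2 - a2 * c1 != 0 ->
  circle_of bb b0 bx by_ (m1 + a1, m2 + a2) -> circle_of bb b0 bx by_ (m1 - a1, m2 - a2) ->
  circle_of bb b0 bx by_ (m1 + c1, m2 + c2) -> circle_of bb b0 bx by_ (m1 - c1, m2 - c2) ->
  (b0 = 0 /\ bx = 0 /\ by_ = 0) \/
  [/\ b0 != 0, bx = m1 * b0, by_ = m2 * b0 & b0^-1 ^+ 2 = a1 ^+ 2 + a2 ^+ 2].
Proof.
rewrite /circle_of => det; case: ifPn => [b0n|/negPn/eqP b00] /= Ha Ha' Hc Hc'.
  have [e1 e2] : m1 - bx / b0 = 0 /\ m2 - by_ / b0 = 0.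
    by apply: orthogonal2_eq0 det _ _; lra.
  right; split => //; last by rewrite -Ha; congr (_ ^+ 2 + _ ^+ 2); lra.
    by move/eqP: e1; rewrite subr_eq0 => /eqP ->; rewrite divfK.
  by move/eqP: e2; rewrite subr_eq0 => /eqP ->; rewrite divfK.
by left; split => //; apply: orthogonal2_eq0 det _ _; lra.
Qed.

Definition det2 (p0 p1 p2 : R * R) : R :=
  (p1.1 - p0.1) * (p2.2 - p0.2) - (p1.2 - p0.2) * (p2.1 - p0.1).

Lemma euclidean_motion_det2 (f : R * R -> R * R) p0 p1 p2 : euclidean_motion f ->
  det2 (f p0) (f p1) (f p2) ^+ 2 = det2 p0 p1 p2 ^+ 2.
Proof.
have cayley_menger q0 q1 q2 : det2 q0 q1 q2 ^+ 2 = sqdist q1 q0 * sqdist q2 q0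
    - ((sqdist q1 q0 + sqdist q2 q0 - sqdist q1 q2) / 2) ^+ 2.
  by rewrite /det2 /sqdist; field.
by move=> fE; rewrite !cayley_menger !fE.
Qed.

Lemma euclidean_motion_eq3 (f h : R * R -> R * R) p0 p1 p2 :
  euclidean_motion f -> euclidean_motion h -> det2 p0 p1 p2 != 0 ->
  f p0 = h p0 -> f p1 = h p1 -> f p2 = h p2 -> f = h.
Proof.
move=> fE hE det fh0 fh1 fh2; apply: funext => x.
have hdet : det2 (h p0) (h p1) (h p2) != 0.
  by rewrite -sqrf_eq0 euclidean_motion_det2 // sqrf_eq0.
have d0 : sqdist (f x) (h p0) = sqdist (h x) (h p0) by rewrite -{1}fh0 fE hE.
have d1 : sqdist (f x) (h p1) = sqdist (h x) (h p1) by rewrite -{1}fh1 fE hE.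
have d2 : sqdist (f x) (h p2) = sqdist (h x) (h p2) by rewrite -{1}fh2 fE hE.
move: hdet d0 d1 d2; rewrite /det2 /sqdist.
case: (f x) (h x) (h p0) (h p1) (h p2) => [q1 q2] [r1 r2] [u1 u2] [v1 v2] [w1 w2] /=.
move=> hdet d0 d1 d2.
have [e1 e2] : q1 - r1 = 0 /\ q2 - r2 = 0 by apply: orthogonal2_eq0 hdet _ _; lra.
by congr pair; lra.
Qed.

End PlaneGeometry.

Ltac mx4_entrywise :=
  apply/matrixP; do 2 case=> [[|[|[|[|?]]]] ?] //;
  rewrite !mxE ?big_ord_recr ?big_ord0 /= ?permE /= ?mxE /=.

Section Generators.
Variable R : realType.

Lemma W1_translation_x :
  W1 *m translation_mx 2 0 = row_perm (tperm o2 o3) (Smx o3 *m W1) :> 'M[R]_4.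
Proof. by mx4_entrywise; ring. Qed.

Lemma W1_translation_xV :
  W1 *m translation_mx (-2) 0 = row_perm (tperm o2 o3) (Smx o2 *m W1) :> 'M[R]_4.
Proof. by mx4_entrywise; ring. Qed.

Lemma W1_translation_y :
  W1 *m translation_mx 0 2 = row_perm (tperm o0 o1) ((Smx o0)^T *m W1) :> 'M[R]_4.
Proof. by mx4_entrywise; ring. Qed.

Lemma W1_translation_yV :
  W1 *m translation_mx 0 (-2) = row_perm (tperm o0 o1) ((Smx o1)^T *m W1) :> 'M[R]_4.
Proof. by mx4_entrywise; ring. Qed.

Lemma W1_sign_change_x :
  W1 *m sign_change_mx (-1) 1 = row_perm (tperm o2 o3) (1%:M *m W1) :> 'M[R]_4.
Proof. by mx4_entrywise; ring. Qed.

Lemma W1_sign_change_y :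
  W1 *m sign_change_mx 1 (-1) = row_perm (tperm o0 o1) (1%:M *m W1) :> 'M[R]_4.
Proof. by mx4_entrywise; ring. Qed.
End Generators.

Section Invariance.
Variable R : realType.
Implicit Types g h : R * R -> R * R.
Local Notation packing := (@std_superpacking R).

Definition preserves_packing g := forall C, packing C -> packing (g @` C).

Lemma preserves_packing_mx g (M : 'M[R]_4) (s : 'S_4) (X : 'M[R]_4) :
  (forall w, g @` circle_of_row w = circle_of_row (w *m M)) ->
  W1 *m M = row_perm s (X *m W1) -> superApollonian X -> preserves_packing g.
Proof.
move=> gM W1M sAX _ [U [i [sAU ->]]]; exists (perm_conj (s^-1)%g U *m X), (s i).
split; first by apply: superApollonian_mul => //; apply: superApollonian_perm_conj.
rewrite gM -row_mul -mulmxA W1M row_permE mulmxA -perm_conjKV -!mulmxA.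
by congr circle_of_row; apply/rowP => j; rewrite -row_permE !mxE.
Qed.

Lemma trans_xE : trans_x = translation 2 0 :> (R * R -> R * R).
Proof. by apply: funext => p; rewrite /translation addr0. Qed.

Lemma trans_x_invE : trans_x_inv = translation (-2) 0 :> (R * R -> R * R).
Proof. by apply: funext => p; rewrite /translation addr0. Qed.

Lemma trans_yE : trans_y = translation 0 2 :> (R * R -> R * R).
Proof. by apply: funext => p; rewrite /translation addr0. Qed.

Lemma trans_y_invE : trans_y_inv = translation 0 (-2) :> (R * R -> R * R).
Proof. by apply: funext => p; rewrite /translation addr0. Qed.

Lemma refl_xE : refl_x = sign_change (-1) 1 :> (R * R -> R * R).
Proof. by apply: funext => p; rewrite /sign_change mul1r mulN1r. Qed.

Lemma refl_yE : refl_y = sign_change 1 (-1) :> (R * R -> R * R).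
Proof. by apply: funext => p; rewrite /sign_change mul1r mulN1r. Qed.

Lemma motion_gen_preserves_packing g : motion_gen g -> preserves_packing g.
Proof.
have sq1 : (-1) ^+ 2 = 1 :> R by rewrite sqrrN expr1n.
case=> [|[|[|[|[|]]]]] ->;
  rewrite ?trans_xE ?trans_yE ?trans_x_invE ?trans_y_invE ?refl_xE ?refl_yE.
- exact: preserves_packing_mx (translation_circle_of_row _ _)
    (W1_translation_x R) (superApollonian_Smx _ _).
- exact: preserves_packing_mx (translation_circle_of_row _ _)
    (W1_translation_y R) (superApollonian_trSmx _ _).
- exact: preserves_packing_mx (fun w => sign_change_circle_of_row w sq1 (expr1n _ _))
    (W1_sign_change_x R) sA_one.
- exact: preserves_packing_mx (fun w => sign_change_circle_of_row w (expr1n _ _) sq1)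
    (W1_sign_change_y R) sA_one.
- exact: preserves_packing_mx (translation_circle_of_row _ _)
    (W1_translation_xV R) (superApollonian_Smx _ _).
- exact: preserves_packing_mx (translation_circle_of_row _ _)
    (W1_translation_yV R) (superApollonian_trSmx _ _).
Qed.

Lemma leaves_invariant_can g g' : preserves_packing g -> preserves_packing g' ->
  cancel g g' -> cancel g' g -> leaves_invariant g.
Proof.
move=> pg pg' gK g'K; rewrite /leaves_invariant (eq_imageK g'K gK).
apply/seteqP; split => A /=; last exact: pg'.
have gg' : g \o g' = id by apply: funext => x; exact: g'K.
by move/pg; rewrite image_comp gg' image_id.
Qed.

Lemma leaves_invariant_preserves g : leaves_invariant g -> preserves_packing g.
Proof. by move=> gP C PC; rewrite -gP; exists C. Qed.

Lemma leaves_invariant_comp g h :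
  leaves_invariant g -> leaves_invariant h -> leaves_invariant (g \o h).
Proof.
rewrite /leaves_invariant => gP hP; rewrite -[RHS]gP -[in RHS]hP image_comp.
by congr image; apply: funext => C /=; rewrite image_comp.
Qed.

Lemma leaves_invariant_id : leaves_invariant (@id (R * R)).
Proof.
rewrite /leaves_invariant -[RHS]image_id; congr image.
by apply: funext => C; rewrite image_id.
Qed.

Lemma motion_gen_inverse g : motion_gen g ->
  exists g', [/\ motion_gen g', cancel g g' & cancel g' g].
Proof.
rewrite /motion_gen.
case=> [|[|[|[|[|]]]]] ->; [exists trans_x_inv | exists trans_y_inv | exists refl_x
  | exists refl_y | exists trans_x | exists trans_y].
all: split; [tauto | |]; case=> x y; rewrite /trans_x /trans_x_inv /trans_y /trans_y_inv.
all: by rewrite /refl_x /refl_y /= ?addrK ?subrK ?opprK.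
Qed.

Lemma motion_gen_leaves_invariant g : motion_gen g -> leaves_invariant g.
Proof.
move=> gen_g; have [g' [gen_g' gK g'K]] := motion_gen_inverse gen_g.
exact: leaves_invariant_can (motion_gen_preserves_packing gen_g)
  (motion_gen_preserves_packing gen_g') gK g'K.
Qed.

Lemma motion_group_leaves_invariant g : motion_group g -> leaves_invariant g.
Proof.
elim=> [|h k gen_h _]; first exact: leaves_invariant_id.
exact/leaves_invariant_comp/motion_gen_leaves_invariant.
Qed.

End Invariance.

Section MotionGroup.
Variable R : realType.
Implicit Types g h : R * R -> R * R.

Lemma motion_group_comp g h : motion_group g -> motion_group h -> motion_group (g \o h).
Proof. by elim=> [|k l gen_k _ IH] mh //; exact: mg_gen gen_k (IH mh). Qed.

Lemma motion_group_gen g : motion_gen g -> motion_group g.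
Proof. by move/mg_gen; apply; exact: mg_id. Qed.

Lemma translation_comp (a b c d : R) :
  translation a b \o translation c d = translation (a + c) (b + d).
Proof. by apply: funext => -[x y]; rewrite /translation /=; congr pair; ring. Qed.

Lemma motion_group_translation_mul (a b : R) (m : int) :
  motion_group (translation a b) -> motion_group (translation (- a) (- b)) ->
  motion_group (translation (m%:~R * a) (m%:~R * b)).
Proof.
move=> mab mabN; elim/int_rec: m => [|k IH|k IH].
- rewrite !mul0r (_ : translation 0 0 = id); first exact: mg_id.
  by apply: funext => -[x y]; rewrite /translation /= !addr0.
- rewrite (_ : translation _ _ = translation a b \o translation (k%:~R * a) (k%:~R * b)).
    exact: motion_group_comp.
  by rewrite translation_comp; congr translation; rewrite intS intrD; ring.
- rewrite (_ : translation _ _ =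
    translation (- a) (- b) \o translation ((- k%:Z)%:~R * a) ((- k%:Z)%:~R * b)).
    exact: motion_group_comp.
  by rewrite translation_comp; congr translation; rewrite intS !intrN intrD; ring.
Qed.

Lemma motion_group_translation (m n : int) :
  motion_group (translation (2 * m%:~R) (2 * n%:~R) : R * R -> R * R).
Proof.
rewrite (_ : translation _ _ =
  translation (m%:~R * 2) (m%:~R * 0) \o translation (n%:~R * 0) (n%:~R * 2)); last first.
  by rewrite translation_comp; congr translation; ring.
apply: motion_group_comp; apply: motion_group_translation_mul; apply: motion_group_gen.
all: by rewrite ?oppr0 -?trans_xE -?trans_x_invE -?trans_yE -?trans_y_invE /motion_gen; tauto.
Qed.

Lemma motion_group_sign_change (s t : int) : (s = 1 \/ s = -1) -> (t = 1 \/ t = -1) ->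
  motion_group (sign_change s%:~R t%:~R : R * R -> R * R).
Proof.
have gen_x : motion_group (@refl_x R) by apply: motion_group_gen; rewrite /motion_gen; tauto.
have gen_y : motion_group (@refl_y R) by apply: motion_group_gen; rewrite /motion_gen; tauto.
case=> -> [] ->.
- rewrite (_ : sign_change _ _ = id); first exact: mg_id.
  by apply: funext => -[x y]; rewrite /sign_change /= !mul1r.
- by rewrite refl_yE in gen_y.
- by rewrite refl_xE in gen_x.
- rewrite (_ : sign_change _ _ = refl_x \o refl_y); first exact: motion_group_comp.
  by apply: funext => -[x y]; rewrite /sign_change /refl_x /refl_y /=; congr pair; ring.
Qed.
End MotionGroup.

Section Necessity.
Variable R : realType.
Implicit Types f : R * R -> R * R.
Local Notation packing := (@std_superpacking R).

Definition odd_even (p : R * R) := exists m n : int, p = ((2 * m + 1)%:~R, (2 * n)%:~R).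

Definition unit_circle (c : R * R) : set (R * R) := [set q | sqdist q c = 1].

Lemma translation_unit_circle (a b : R) c :
  translation a b @` unit_circle c = unit_circle (c.1 + a, c.2 + b).
Proof.
rewrite (@image_can _ _ _ (translation (- a) (- b))); last 2 first.
- by case=> x y; rewrite /translation /=; congr pair; ring.
- by case=> x y; rewrite /translation /=; congr pair; ring.
by apply: eq_set => -[x y]; rewrite /unit_circle /sqdist /=; congr (_ = _); ring.
Qed.

Lemma W1_row_packing i : packing (circle_of_row (row i W1)).
Proof. by exists 1%:M, i; rewrite mul1mx; split => //; exact: sA_one. Qed.

Lemma W1_row2_unit_circle : circle_of_row (row o2 W1) = unit_circle (1, 0).
Proof.
rewrite circle_of_rowE !mxE /= /circle_of oner_neq0.
by apply: eq_set => -[x y]; rewrite /unit_circle /sqdist /=; congr (_ = _); field.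
Qed.

Lemma unit_circle_packing c : odd_even c -> packing (unit_circle c).
Proof.
move=> [m [n ->]].
have -> : unit_circle ((2 * m + 1)%:~R, (2 * n)%:~R) =
          translation (2 * m%:~R) (2 * n%:~R) @` circle_of_row (row o2 W1).
  rewrite W1_row2_unit_circle translation_unit_circle.
  by congr (unit_circle (_, _)); rewrite /=; ring.
apply/leaves_invariant_preserves/W1_row_packing.
exact/motion_group_leaves_invariant/motion_group_translation.
Qed.

Lemma row_parity_two_diameters (w : 'rV[R]_4) (m1 m2 a1 a2 c1 c2 : R) :
  row_parity w -> a1 ^+ 2 + a2 ^+ 2 = 1 -> a1 * c2 - a2 * c1 != 0 ->
  circle_of_row w (m1 + a1, m2 + a2) -> circle_of_row w (m1 - a1, m2 - a2) ->
  circle_of_row w (m1 + c1, m2 + c2) -> circle_of_row w (m1 - c1, m2 - c2) ->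
  odd_even (m1, m2).
Proof.
move=> par na det; rewrite circle_of_rowE => Ha Ha' Hc Hc'.
case: (circle_of_two_diameters det Ha Ha' Hc Hc') => [[b0 [_ b3]]|[_ b2 b3 r]].
  by have := row_parity_line par b0; rewrite b3 eqxx.
have b1sq : w ord0 o1 ^+ 2 = 1 by rewrite -[LHS]invrK -exprVn r na invr1.
have m1E : m1 = w ord0 o2 * w ord0 o1 by rewrite b2 -mulrA -expr2 b1sq mulr1.
have m2E : m2 = w ord0 o3 * w ord0 o1 by rewrite b3 -mulrA -expr2 b1sq mulr1.
case: par b1sq m1E m2E => -[z1 [z2 [z3 [-> -> ->]]]] b1sq -> ->.
  have : (2 * z1) ^+ 2 = 1 by apply: (@intr_inj R); rewrite rmorphXn /= b1sq.
  lia.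
exists (2 * z1 * z2 + z1 + z2), (z3 * (2 * z1 + 1)).
by congr pair; rewrite -intrM; congr intmul; ring.
Qed.

Lemma motion_odd_even f c : euclidean_motion f -> preserves_packing f ->
  odd_even c -> odd_even (f c).
Proof.
move=> fE fP oc; have [U [i [sAU fC]]] := fP _ (unit_circle_packing oc).
have onC p q : sqdist p c = 1 -> f p = q -> circle_of_row (row i (U *m W1)) q.
  by move=> pc <-; rewrite -fC; exists p.
pose pa := (c.1 + 1, c.2); pose pa' := (c.1 - 1, c.2).
pose pb := (c.1, c.2 + 1); pose pb' := (c.1, c.2 - 1).
have fa' : f pa' = (2 * (f c).1 - (f pa).1, 2 * (f c).2 - (f pa).2).
  by apply: (sqdist_midpoint (r := 1)); rewrite !fE /sqdist /=; ring.
have fb' : f pb' = (2 * (f c).1 - (f pb).1, 2 * (f c).2 - (f pb).2).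
  by apply: (sqdist_midpoint (r := 1)); rewrite !fE /sqdist /=; ring.
have det : det2 (f c) (f pa) (f pb) != 0.
  rewrite -sqrf_eq0 euclidean_motion_det2 // (_ : det2 _ _ _ = 1) ?expr1n ?oner_eq0 //.
  by rewrite /det2 /=; ring.
have -> : f c = ((f c).1, (f c).2) by case: (f c).
apply: (row_parity_two_diameters (superApollonian_row_parity i sAU) _ det).
- by move: (fE pa c); rewrite /sqdist /= => ->; ring.
- apply: (onC pa); first by rewrite /sqdist /=; ring.
  by case: (f pa) => x y /=; congr pair; ring.
- apply: (onC pa'); first by rewrite /sqdist /=; ring.
  by rewrite fa'; congr pair; ring.
- apply: (onC pb); first by rewrite /sqdist /=; ring.
  by case: (f pb) => x y /=; congr pair; ring.
- apply: (onC pb'); first by rewrite /sqdist /=; ring.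
  by rewrite fb'; congr pair; ring.
Qed.

Lemma row_parity_vertical (w : 'rV[R]_4) (x y s : R) : row_parity w ->
  circle_of_row w (x, y) -> circle_of_row w (x, y + s) -> circle_of_row w (x, y + 2 * s) ->
  s = 0.
Proof.
move=> par; rewrite circle_of_rowE /circle_of.
case: ifPn => [_|/negPn/eqP b0] /= h0 h1 h2.
  by apply/eqP; rewrite -sqrf_eq0; apply/eqP; lra.
have : w ord0 o3 * s = 0 by lra.
by move/eqP; rewrite mulf_eq0 (negbTE (row_parity_line par b0)) => /eqP.
Qed.

Definition axis_motion (a b p q : int) (x : R * R) : R * R :=
  ((2 * a + 1)%:~R + p%:~R * (x.1 - 1), (2 * b)%:~R + q%:~R * x.2).

Definition swap_motion (a b p q : int) (x : R * R) : R * R :=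
  ((2 * a + 1)%:~R + p%:~R * x.2, (2 * b)%:~R + q%:~R * (x.1 - 1)).

Lemma axis_motion_euclidean a b p q : (p = 1 \/ p = -1) -> (q = 1 \/ q = -1) ->
  euclidean_motion (axis_motion a b p q).
Proof. by case=> -> [] -> [x1 x2] [y1 y2]; rewrite /sqdist /=; ring. Qed.

Lemma swap_motion_euclidean a b p q : (p = 1 \/ p = -1) -> (q = 1 \/ q = -1) ->
  euclidean_motion (swap_motion a b p q).
Proof. by case=> -> [] -> [x1 x2] [y1 y2]; rewrite /sqdist /=; ring. Qed.

Lemma axis_motion_group a b p q : (p = 1 \/ p = -1) -> (q = 1 \/ q = -1) ->
  motion_group (axis_motion a b p q).
Proof.
move=> hp hq; have [m mE] : exists m, 2 * a + 1 - p = 2 * m.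
  by case: hp => ->; [exists a | exists (a + 1)]; ring.
have mR : (2 * a + 1)%:~R - p%:~R = 2 * m%:~R :> R.
  by rewrite -intrB mE intrM.
rewrite (_ : axis_motion _ _ _ _ =
  translation (2 * m%:~R) (2 * b%:~R) \o sign_change p%:~R q%:~R).
  exact/motion_group_comp/motion_group_sign_change/hq/hp/motion_group_translation.
apply: funext => -[x y].
by rewrite /axis_motion /translation /sign_change /= -mR; congr pair; ring.
Qed.

Lemma W1_row0_line x : circle_of_row (row o0 W1) (x, 1 : R).
Proof. by rewrite circle_of_rowE !mxE /= /circle_of eqxx /=; field. Qed.

Lemma swap_motion_not_preserves a b p q : (q = 1 \/ q = -1) ->
  ~ preserves_packing (swap_motion a b p q).
Proof.
move=> hq sP; have [U [i [sAU C]]] := sP _ (W1_row_packing o0).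
have onC x y : swap_motion a b p q (x, 1) = y -> circle_of_row (row i (U *m W1)) y.
  by move=> <-; rewrite -C; exists (x, 1); first exact: W1_row0_line.
have /eqP : (q%:~R : R) = 0.
  apply: (row_parity_vertical (superApollonian_row_parity i sAU)
            (x := (2 * a + 1)%:~R + p%:~R) (y := (2 * b)%:~R - q%:~R)).
  - by apply: (onC 0); rewrite /swap_motion /=; congr pair; ring.
  - by apply: (onC 1); rewrite /swap_motion /=; congr pair; ring.
  - by apply: (onC 2); rewrite /swap_motion /=; congr pair; ring.
by rewrite intr_eq0; case: hq => ->.
Qed.

Lemma int_orthonormal (p q p' q' : int) :
  p * p + q * q = 1 -> p' * p' + q' * q' = 1 -> p * p' + q * q' = 0 ->
  (q = 0 /\ p' = 0 /\ (p = 1 \/ p = -1) /\ (q' = 1 \/ q' = -1)) \/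
  (p = 0 /\ q' = 0 /\ (q = 1 \/ q = -1) /\ (p' = 1 \/ p' = -1)).
Proof. nia. Qed.

Lemma motion_lattice_cases f : euclidean_motion f ->
  odd_even (f (1, 0)) -> odd_even (f (3, 0)) -> odd_even (f (1, 2)) ->
  exists a b p q : int, [/\ p = 1 \/ p = -1, q = 1 \/ q = -1 &
    f = axis_motion a b p q \/ f = swap_motion a b p q].
Proof.
move=> fE [a [b f0]] [a1 [b1 f1]] [a2 [b2 f2]].
have n1 : (a1 - a) * (a1 - a) + (b1 - b) * (b1 - b) = 1.
  apply: (@intr_inj R); move: (fE (3, 0) (1, 0)).
  by rewrite f0 f1 /sqdist /= !(intrD, intrM, intrB) => h; lra.
have n2 : (a2 - a) * (a2 - a) + (b2 - b) * (b2 - b) = 1.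
  apply: (@intr_inj R); move: (fE (1, 2) (1, 0)).
  by rewrite f0 f2 /sqdist /= !(intrD, intrM, intrB) => h; lra.
have o12 : (a1 - a) * (a2 - a) + (b1 - b) * (b2 - b) = 0.
  apply: (@intr_inj R); move: (fE (1, 2) (3, 0)) (fE (3, 0) (1, 0)) (fE (1, 2) (1, 0)).
  by rewrite f0 f1 f2 /sqdist /= !(intrD, intrM, intrB) => h h1 h2; lra.
have det : det2 (1, 0) (3, 0) (1, 2) != 0 :> R by rewrite /det2 /=; apply/eqP; lra.
case: (int_orthonormal n1 n2 o12) => [[q0 [p'0 [hp hq]]]|[p0 [q'0 [hq hp]]]].
- have [? ?] : b1 = b /\ a2 = a by lia.
  subst b1 a2.
  exists a, b, (a1 - a), (b2 - b); split => //; left.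
  by apply: (euclidean_motion_eq3 fE (axis_motion_euclidean _ _ hp hq) det);
    [rewrite f0 | rewrite f1 | rewrite f2]; rewrite /axis_motion /=; congr pair; ring.
- have [? ?] : a1 = a /\ b2 = b by lia.
  subst a1 b2.
  exists a, b, (a2 - a), (b1 - b); split => //; right.
  by apply: (euclidean_motion_eq3 fE (swap_motion_euclidean _ _ hp hq) det);
    [rewrite f0 | rewrite f1 | rewrite f2]; rewrite /swap_motion /=; congr pair; ring.
Qed.

Lemma invariant_motion_in_group f :
  euclidean_motion f -> leaves_invariant f -> motion_group f.
Proof.
move=> fE /leaves_invariant_preserves fP.
have lattice x y (m n : int) :
    (x, y) = ((2 * m + 1)%:~R, (2 * n)%:~R) -> odd_even (f (x, y)).
  by move=> xy; apply: motion_odd_even fE fP _; exists m, n.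
have f10 : odd_even (f (1, 0)) by apply: (lattice _ _ 0 0); congr pair; ring.
have f30 : odd_even (f (3, 0)) by apply: (lattice _ _ 1 0); congr pair; ring.
have f12 : odd_even (f (1, 2)) by apply: (lattice _ _ 0 1); congr pair; ring.
have [a [b [p [q [hp hq [->|fswap]]]]]] := motion_lattice_cases fE f10 f30 f12.
  exact: axis_motion_group.
by move: fP; rewrite fswap => /(swap_motion_not_preserves hq).
Qed.

End Necessity.

Theorem theorem6p1 (R : realType) :
  (leaves_invariant (@trans_x R) /\ leaves_invariant (@trans_y R) /\
   leaves_invariant (@refl_x R) /\ leaves_invariant (@refl_y R)) /\
  (forall f : R * R -> R * R, euclidean_motion f ->
     (leaves_invariant f <-> motion_group f)).
Proof.
split.
  by split; [|split; [|split]]; apply: motion_gen_leaves_invariant; rewrite /motion_gen; tauto.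
move=> f fE; split; first exact: invariant_motion_in_group.
exact: motion_group_leaves_invariant.
Qed.
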